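(* Run the rank-augmenting TTN integrator (described in the context) on the maximal tree $\bar\tau$ with an orthonormal starting TTN $Y_{\bar\tau}^0$ of full tree rank, a function $F$, and times $t_0<t_1$. Let $\tau=(\tau_1,\dots,\tau_m)$ be any non-leaf subtree of $\bar\tau$, and consider the call of the integrator at $\tau$ (the top-level call if $\tau=\bar\tau$, otherwise the recursive call arising in the computation), with starting TTN $Y_\tau^0=C_\tau^0\times_0\mathbf{I}_{r_\tau}\times_{i=1}^m\mathbf{U}_{\tau_i}^0$. Let $\widehat{\mathbf{U}}_{\tau_i}$ ($i=1,\dots,m$) and $\widehat C_\tau^0=C_\tau^0\times_{i=1}^m\widehat{\mathbf{M}}_{\tau_i}$ be the augmented basis matrices and augmented initial connection tensor computed in this call, and set $\widehat Y_\tau^0:=\widehat C_\tau^0\times_0\mathbf{I}_{r_\tau}\times_{i=1}^m\widehat{\mathbf{U}}_{\tau_i}$. Then $\widehat Y_\tau^0 = Y_\tau^0$.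
   Context: Tensor notation: for a tensor with modes indexed $0,1,\dots,m$, $\mathrm{mat}_i$ is the mode-$i$ matricization (rows indexed by the $i$th index) and $\mathrm{ten}_i$ its inverse; $A\times_i\mathbf{B}$ is the mode-$i$ product, $\mathrm{mat}_i(A\times_i\mathbf{B})=\mathbf{B}\,\mathrm{mat}_i(A)$; $\times_{i=1}^m$ denotes successive products in modes $1,\dots,m$; ${}^*$ is conjugate transpose; $\|\cdot\|$ and $\langle X,Y\rangle=\sum \overline{x}\,y$ are the Euclidean norm and inner product of the vectors of entries. Trees: given a finite leaf set $\mathcal{L}=\{1,\dots,d\}$, each leaf $l$ is a tree with leaf set $\{l\}$; if $\tau_1,\dots,\tau_m$ ($m\ge2$) are trees with pairwise disjoint leaf sets, the ordered tuple $\tau=(\tau_1,\dots,\tau_m)$ is a tree whose leaf set is their union; the $\tau_i$ are its direct subtrees, and subtrees are defined recursively ($\sigma\le\tau$, $\sigma<\tau$ if also $\sigma\ne\tau$). Fix a tree $\bar\tau$ with leaf set $\mathcal{L}$. Tree tensor networks (TTN): given dimensions $n_l$ and ranks $r_\sigma$ ($\sigma\le\bar\tau$, $r_{\bar\tau}=1$), basis matrices $\mathbf{U}_l\in\mathbb{C}^{n_l\times r_l}$ at leaves and connection tensors $C_\tau\in\mathbb{C}^{r_\tau\times r_{\tau_1}\times\dots\times r_{\tau_m}}$ of full multilinear rank at non-leaf subtrees $\tau=(\tau_1,\dots,\tau_m)$, set $X_l=\mathbf{U}_l^\top$, $X_\tau=C_\tau\times_0\mathbf{I}_{r_\tau}\times_{i=1}^m\mathbf{U}_{\tau_i}\in\mathcal{V}_\tau:=\mathbb{C}^{r_\tau\times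 n_{\tau_1}\times\dots\times n_{\tau_m}}$ with $n_\tau=\prod_i n_{\tau_i}$, and $\mathbf{U}_\tau=\mathrm{mat}_0(X_\tau)^\top\in\mathbb{C}^{n_\tau\times r_\tau}$; for a leaf, $\mathcal{V}_l:=\mathbb{C}^{r_l\times n_l}$. The TTN is orthonormal if every $\mathbf{U}_\sigma$, $\sigma<\bar\tau$, has orthonormal columns. Full tree rank means all connection tensors have full multilinear rank. $\mathcal{V}_{\bar\tau}$ is identified with $\mathbb{C}^{n_1\times\dots\times n_d}$. Reduced operators and starting values: for a non-leaf $\tau=(\tau_1,\dots,\tau_m)$, a function $F_\tau:[t_0,t_1]\times\mathcal{V}_\tau\to\mathcal{V}_\tau$ and a starting TTN $Y_\tau^0=C_\tau^0\times_0\mathbf{I}_{r_\tau}\times_{i=1}^m\mathbf{U}_{\tau_i}^0$ with $\mathbf{U}_{\tau_i}^0=\mathrm{mat}_0(X_{\tau_i}^0)^\top$, compute QR decompositions $\mathrm{mat}_i(C_\tau^0)^\top=\mathbf{Q}_{\tau_i}^0\mathbf{S}_{\tau_i}^{0,\top}$, let $\mathbf{V}_{\tau_i}^0=\mathrm{mat}_i\big(\mathrm{ten}_i(\mathbf{Q}_{\tau_i}^{0,\top})\times_0\mathbf{I}_{r_\tau}\times_{j\ne i}\mathbf{U}_{\tau_j}^0\big)^\top$, prolongation $\pi_{\tau,i}(Y)=\mathrm{ten}_i\big((\mathbf{V}_{\tau_i}^0\mathrm{mat}_0(Y))^\top\big)$ for $Y\in\mathcal{V}_{\tau_i}$, restriction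 $\pi_{\tau,i}^\dagger(Z)=\mathrm{ten}_0\big((\mathrm{mat}_i(Z)\mathbf{V}_{\tau_i}^0)^\top\big)$ for $Z\in\mathcal{V}_\tau$, and set $F_{\tau_i}(t,Y)=\pi_{\tau,i}^\dagger(F_\tau(t,\pi_{\tau,i}(Y)))$ and $Y_{\tau_i}^0=X_{\tau_i}^0\times_0\mathbf{S}_{\tau_i}^{0,\top}$. Rank-augmenting TTN integrator on $(\tau,Y_\tau^0,F_\tau,t_0,t_1)$, $\tau$ non-leaf: (1) for each $i$: if $\tau_i=l$ is a leaf, solve $\dot Y_l=F_l(t,Y_l)$, $Y_l(t_0)=Y_l^0$, let $\widehat{\mathbf{U}}_l$ have orthonormal columns spanning the range of $(Y_l(t_1)^\top,\mathbf{U}_l^0)$, and $\widehat{\mathbf{M}}_l=\widehat{\mathbf{U}}_l^*\mathbf{U}_l^0$; otherwise call the integrator recursively on $(\tau_i,Y_{\tau_i}^0,F_{\tau_i},t_0,t_1)$, obtaining $\widehat Y_{\tau_i}^1$ (with root connection tensor $\widehat C_{\tau_i}^1$) and $\widehat C_{\tau_i}^0$, let $\widehat{\mathbf{Q}}_{\tau_i}$ have orthonormal columns spanning the range of $(\mathrm{mat}_0(\widehat C_{\tau_i}^1)^\top,\mathrm{mat}_0(\widehat C_{\tau_i}^0)^\top)$, let $\widehat X_{\tau_i}$ be $\widehat Y_{\tau_i}^1$ with root connection tensor replaced by $\mathrm{ten}_0(\widehat{\mathbf{Q}}_{\tau_i}^\top)$, and set $\widehat{\mathbf{U}}_{\tau_i}=\mathrm{mat}_0(\widehat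 X_{\tau_i})^\top$, $\widehat{\mathbf{M}}_{\tau_i}=\widehat{\mathbf{U}}_{\tau_i}^*\mathbf{U}_{\tau_i}^0$. (2) Set $\widehat C_\tau^0=C_\tau^0\times_{i=1}^m\widehat{\mathbf{M}}_{\tau_i}$, solve $\dot{\widehat C}_\tau(t)=F_\tau\big(t,\widehat C_\tau(t)\times_0\mathbf{I}_{r_\tau}\times_{i=1}^m\widehat{\mathbf{U}}_{\tau_i}\big)\times_{i=1}^m\widehat{\mathbf{U}}_{\tau_i}^*$, $\widehat C_\tau(t_0)=\widehat C_\tau^0$, set $\widehat C_\tau^1=\widehat C_\tau(t_1)$, and return $\widehat Y_\tau^1=\widehat C_\tau^1\times_0\mathbf{I}_{r_\tau}\times_{i=1}^m\widehat{\mathbf{U}}_{\tau_i}$ and $\widehat C_\tau^0$. At the top level, $F_{\bar\tau}=F$ and $Y_{\bar\tau}^0$ is the given starting TTN. All differential equations are assumed to be solved exactly. *)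

From HB Require Import structures.
From mathcomp Require Import all_boot all_order all_algebra.
From mathcomp Require Import all_classical all_reals topology normedtype.
From mathcomp.real_closed Require Import complex.
Set Implicit Arguments. Unset Strict Implicit. Unset Printing Implicit Defensive.
Import Order.TTheory GRing.Theory Num.Theory.
Import numFieldNormedType.Exports.
Local Open Scope ring_scope.
Local Open Scope classical_set_scope.

Inductive tree : Type :=
| Leaf of nat
| Node (m : nat) of ('I_m -> tree).

Fixpoint leaves (s : tree) : seq nat :=
  match s with
  | Leaf l => [:: l]
  | Node m ch => flatten [seq leaves (ch i) | i <- enum 'I_m]
  end.

Fixpoint nodes_ge2 (s : tree) : Prop :=
  match s with
  | Leaf _ => True
  | Node m ch => (2 <= m)%N /\ forall i, nodes_ge2 (ch i)
  end.

(* a tree with leaf set {1,...,d}: m >= 2 at every node, and the leaf sets of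
   the direct subtrees are pairwise disjoint (all leaves distinct), with union
   {1,..,d} *)
Definition tree_on (d : nat) (s : tree) : Prop :=
  nodes_ge2 s /\ perm_eq (leaves s) (iota 1 d).

Inductive subtree (s : tree) : tree -> Prop :=
| subtree_refl : subtree s s
| subtree_child m (ch : 'I_m -> tree) (i : 'I_m) :
    subtree s (ch i) -> subtree s (Node ch).

(* Index sets.  Idx n s is the index set of the "physical" modes of V_s:     *)
(* for a leaf l it is 'I_(n l); for tau = (tau_1..tau_m) it is the product   *)
(* of the index sets of the tau_i.  So V_tau = C^{r_tau x n_tau1 x..x n_taum}*)
(* is the type of functions 'I_(r tau) -> Idx n tau -> C, the mode i index   *)
(* (i >= 1) being the i-th component of the Idx n tau index.                 *)
Fixpoint Idx (n : nat -> nat) (s : tree) : finType :=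
  match s with
  | Leaf l => 'I_(n l)
  | Node m ch => {dffun forall i : 'I_m, Idx n (ch i)}
  end.

Definition idx_at (n : nat -> nat) m (ch : 'I_m -> tree)
  (x : Idx n (Node ch)) (i : 'I_m) : Idx n (ch i) :=
  (x : {dffun forall i : 'I_m, Idx n (ch i)}) i.

Definition dfw m (T : 'I_m -> finType) (b : {dffun forall j : 'I_m, T j})
  (i : 'I_m) (k : T i) : {dffun forall j : 'I_m, T j} :=
  [ffun j => @dfwith _ (fun j => T j) (fun j => b j) i k j].
Arguments dfw {m T} b i k.

Section TTN.
Context {R : realType}.
Local Notation C := (R[i]).

Definition V (n : nat -> nat) (r : tree -> nat) (s : tree) : Type :=
  'I_(r s) -> Idx n s -> C.

(* connection tensors at tau = Node ch: C in C^{r0 x rc_1 x ... x rc_m},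
   written as functions of the mode-0 index and the multi-index of modes 1..m *)
Definition ctens (r0 : nat) m (rc : 'I_m -> nat) : Type :=
  'I_r0 -> {dffun forall i : 'I_m, 'I_(rc i)} -> C.

(* successive mode products:  Cn x_0 I x_{i=1}^m U_i  (U_i of size n_{tau_i} x rc_i),
   written entrywise *)
Definition mode_prods (n : nat -> nat) (r0 : nat) m (ch : 'I_m -> tree)
  (rc : 'I_m -> nat) (Cn : ctens r0 rc)
  (U : forall i : 'I_m, Idx n (ch i) -> 'I_(rc i) -> C) :
  'I_r0 -> Idx n (Node ch) -> C :=
  fun a x => \sum_(b : {dffun forall i : 'I_m, 'I_(rc i)})
               Cn a b * \prod_(i < m) U i (idx_at x i) (b i).

(* successive mode products with the conjugate transposes:
   Z x_{i=1}^m U_i^*  *)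
Definition mode_prods_adj (n : nat -> nat) (r0 : nat) m (ch : 'I_m -> tree)
  (rc : 'I_m -> nat) (Z : 'I_r0 -> Idx n (Node ch) -> C)
  (U : forall i : 'I_m, Idx n (ch i) -> 'I_(rc i) -> C) : ctens r0 rc :=
  fun a bh => \sum_(x : Idx n (Node ch))
               Z a x * \prod_(i < m) (U i (idx_at x i) (bh i))^*.

(* The ttn_basis matrices U_s = mat_0(X_s)^T of a TTN with leaf bases Ul and
   connection tensors Cn (X_l = U_l^T, X_tau = C_tau x_0 I x_i U_{tau_i}). *)
Fixpoint ttn_basis (n : nat -> nat) (r : tree -> nat)
  (Ul : forall l : nat, 'I_(n l) -> 'I_(r (Leaf l)) -> C)
  (Cn : forall m (ch : 'I_m -> tree), ctens (r (Node ch)) (fun i => r (ch i)))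
  (s : tree) : Idx n s -> 'I_(r s) -> C :=
  match s return Idx n s -> 'I_(r s) -> C with
  | Leaf l => Ul l
  | Node m ch => fun x a =>
      mode_prods (Cn m ch) (fun i => @ttn_basis n r Ul Cn (ch i)) a x
  end.
Arguments ttn_basis {n r} Ul Cn s _ _.
Arguments mode_prods {n r0 m ch rc} Cn U _ _.
Arguments mode_prods_adj {n r0 m ch rc} Z U _ _.

Definition orthonormal_cols (I : finType) k (A : I -> 'I_k -> C) : Prop :=
  forall j j' : 'I_k, \sum_(x : I) (A x j)^* * A x j' = (j == j')%:R.

Definition range_sub (I J K : finType) (A : I -> J -> C) (B : I -> K -> C) : Prop :=
  forall j : J, exists c : K -> C, forall x, A x j = \sum_(k : K) B x k * c k.

Definition same_range (I J K : finType) (A : I -> J -> C) (B : I -> K -> C) : Prop :=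
  range_sub A B /\ range_sub B A.

Definition cat_cols (I J K : finType) (A : I -> J -> C) (B : I -> K -> C) :
  I -> (J + K)%type -> C :=
  fun x jk => match jk with inl j => A x j | inr k => B x k end.

(* full multilinear rank: every matricization mat_k(Cn), k = 0..m, has
   linearly independent rows (rank = dimension of mode k) *)
Definition full_mlrank (r0 : nat) m (rc : 'I_m -> nat) (Cn : ctens r0 rc) : Prop :=
  (forall c : 'I_r0 -> C,
     (forall b, \sum_(a < r0) c a * Cn a b = 0) -> forall a, c a = 0) /\
  (forall (i : 'I_m) (c : 'I_(rc i) -> C),
     (forall a b, \sum_(k < rc i) c k * Cn a (dfw b i k) = 0) -> forall k, c k = 0).

(* derivative of a real function at t in [t0,t1], relative to [t0,t1]
   (one-sided at the end points) *)
Definition has_rderiv_on (t0 t1 : R) (g : R -> R) (t v : R) : Prop :=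
  h^-1 * (g (t + h) - g t)
    @[h --> within [set h | h != 0 /\ t0 <= t + h <= t1] (nbhs (0 : R))] --> v.

Definition has_cderiv_on (t0 t1 : R) (y : R -> C) (t : R) (v : C) : Prop :=
  has_rderiv_on t0 t1 (fun s => complex.Re (y s)) t (complex.Re v) /\
  has_rderiv_on t0 t1 (fun s => complex.Im (y s)) t (complex.Im v).

Definition ode_sol (A B : Type) (t0 t1 : R)
  (f : R -> (A -> B -> C) -> A -> B -> C)
  (y : R -> A -> B -> C) (y0 : A -> B -> C) : Prop :=
  (forall a b, y t0 a b = y0 a b) /\
  (forall t, t0 <= t <= t1 ->
     forall a b, has_cderiv_on t0 t1 (fun s => y s a b) t (f t (y t) a b)).

(* Given tau = Node ch, the tensor Qt = ten_i(Q_{tau_i}^{0,T}) (of the shape of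
   C_tau) and the bases U_{tau_j}: the matrix
   V_{tau_i}^0 = mat_i(ten_i(Q^T) x_0 I x_{j<>i} U_{tau_j})^T,
   with rows (a, x_{-i}) (x_{-i} = all components of x but the i-th, which is
   ignored) and columns k. *)
Definition Vmat (n : nat -> nat) (r : tree -> nat) m (ch : 'I_m -> tree)
  (i : 'I_m) (Qt : ctens (r (Node ch)) (fun j => r (ch j)))
  (U : forall j : 'I_m, Idx n (ch j) -> 'I_(r (ch j)) -> C)
  (a : 'I_(r (Node ch))) (x : Idx n (Node ch)) (k : 'I_(r (ch i))) : C :=
  \sum_(b : {dffun forall j : 'I_m, 'I_(r (ch j))} | b i == k)
     Qt a b * \prod_(j < m | j != i) U j (idx_at x j) (b j).


Arguments Vmat {n r m ch} i Qt U a x k.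

(* prolongation  pi_{tau,i}(Y) = ten_i((V^0 mat_0(Y))^T) *)
Definition prolong (n : nat -> nat) (r : tree -> nat) m (ch : 'I_m -> tree)
  (i : 'I_m) (Vm : 'I_(r (Node ch)) -> Idx n (Node ch) -> 'I_(r (ch i)) -> C)
  (Y : V n r (ch i)) : V n r (Node ch) :=
  fun a x => \sum_(k < r (ch i)) Vm a x k * Y k (idx_at x i).


Arguments prolong {n r m ch i} Vm Y _ _.

(* restriction  pi^dagger_{tau,i}(Z) = ten_0((mat_i(Z) V^0)^T) *)
Definition restrict (n : nat -> nat) (r : tree -> nat) m (ch : 'I_m -> tree)
  (i : 'I_m) (Vm : 'I_(r (Node ch)) -> Idx n (Node ch) -> 'I_(r (ch i)) -> C)
  (Z : V n r (Node ch)) : V n r (ch i) :=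
  fun k y => \sum_(a < r (Node ch)) \sum_(x : Idx n (Node ch) | idx_at x i == y)
               Z a x * Vm a x k.


Arguments restrict {n r m ch i} Vm Z _ _.

(* A complete (exact) run of the rank-augmenting TTN integrator on           *)
(* (tbar, Y^0, F, t0, t1), where Y^0 has leaf bases Ul0 and connection       *)
(* tensors C0 (ranks r).  Every subtree sigma <= tbar is treated by exactly  *)
(* one (recursive) call, so all quantities computed during the run are       *)
(* the properties are the defining steps of the algorithm (all the choices   *)
(* -- QR factors, orthonormal bases, ODE solutions -- are arbitrary valid    *)
(* ones).                                                                    *)
Record integrator_run (n : nat -> nat) (r : tree -> nat) (tbar : tree)
  (Ul0 : forall l : nat, 'I_(n l) -> 'I_(r (Leaf l)) -> C)
  (C0 : forall m (ch : 'I_m -> tree), ctens (r (Node ch)) (fun i => r (ch i)))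
  (F : R -> V n r tbar -> V n r tbar) (t0 t1 : R) := {
  rh : tree -> nat;
  (* S^0_sigma from the QR decomposition in the parent's call *)
  Sf : forall s : tree, 'I_(r s) -> 'I_(r s) -> C;
  (* Q^0_{tau_i}, stored as the tensor ten_i(Q^{0,T}_{tau_i}) of C_tau's shape *)
  Qf : forall m (ch : 'I_m -> tree) (i : 'I_m),
         ctens (r (Node ch)) (fun j => r (ch j));
  (* root connection tensor C^0_tau of the starting TTN Y^0_tau of the call at tau *)
  Cs : forall m (ch : 'I_m -> tree), ctens (r (Node ch)) (fun i => r (ch i));
  Fs : forall s : tree, R -> V n r s -> V n r s;
  (* exact solution Y_l(t) of the leaf ODE *)
  Yl : forall s : tree, R -> V n r s;
  Uh : forall s : tree, Idx n s -> 'I_(rh s) -> C;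
  Qh : forall m (ch : 'I_m -> tree),
         {dffun forall j : 'I_m, 'I_(rh (ch j))} -> 'I_(rh (Node ch)) -> C;
  (* Chat^0_tau, Chat^1_tau and the exact solution Chat_tau(t) *)
  Ch0 : forall m (ch : 'I_m -> tree), ctens (r (Node ch)) (fun i => rh (ch i));
  Ch1 : forall m (ch : 'I_m -> tree), ctens (r (Node ch)) (fun i => rh (ch i));
  Cp  : forall m (ch : 'I_m -> tree), R -> ctens (r (Node ch)) (fun i => rh (ch i));

  run_root_C : forall m (ch : 'I_m -> tree), Node ch = tbar ->
    forall a b, @Cs m ch a b = @C0 m ch a b;
  run_root_F : forall t Y a x, @Fs tbar t Y a x = F t Y a x;
  (* QR decompositions  mat_i(C^0_tau)^T = Q^0_{tau_i} S^{0,T}_{tau_i}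
     (Q orthonormal columns, S^{0,T} upper triangular) *)
  run_QR : forall m (ch : 'I_m -> tree) (i : 'I_m), subtree (Node ch) tbar ->
    [/\ forall a b, @Cs m ch a b =
           \sum_(k < r (ch i)) @Qf m ch i a (dfw b i k) * @Sf (ch i) (b i) k,
        forall k k' : 'I_(r (ch i)),
          \sum_(a < r (Node ch))
            \sum_(b : {dffun forall j : 'I_m, 'I_(r (ch j))} | b i == k)
              (@Qf m ch i a b)^* * @Qf m ch i a (dfw b i k') = (k == k')%:R
      & forall j k : 'I_(r (ch i)), (j < k)%N -> @Sf (ch i) j k = 0];
  (* reduced operators  F_{tau_i}(t,Y) = pi^dagger(F_tau(t, pi(Y))) *)
  run_F_child : forall m (ch : 'I_m -> tree) (i : 'I_m), subtree (Node ch) tbar ->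
    forall t (Y : V n r (ch i)) k y,
      @Fs (ch i) t Y k y =
      restrict (Vmat i (@Qf m ch i) (fun j => ttn_basis Ul0 C0 (ch j)))
               (@Fs (Node ch) t (prolong (Vmat i (@Qf m ch i)
                                 (fun j => ttn_basis Ul0 C0 (ch j))) Y)) k y;
  (* starting values of the recursive calls: Y^0_{tau_i} = X^0_{tau_i} x_0 S^{0,T},
     i.e. the root connection tensor is C^0_{tau_i} x_0 S^{0,T} *)
  run_C_child : forall m (ch : 'I_m -> tree),
    subtree (Node ch) tbar -> Node ch <> tbar ->
    forall a b, @Cs m ch a b = \sum_(k < r (Node ch)) @Sf (Node ch) k a * @C0 m ch k b;
  run_leaf : forall l : nat, subtree (Leaf l) tbar -> Leaf l <> tbar ->
    [/\ ode_sol t0 t1 (@Fs (Leaf l)) (@Yl (Leaf l))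
          (fun a x => \sum_(k < r (Leaf l))
                        @Sf (Leaf l) k a * ttn_basis Ul0 C0 (Leaf l) x k),
        orthonormal_cols (@Uh (Leaf l))
      & same_range (@Uh (Leaf l))
          (cat_cols (fun x a => @Yl (Leaf l) t1 a x) (ttn_basis Ul0 C0 (Leaf l)))];
  run_inner : forall m (ch : 'I_m -> tree),
    subtree (Node ch) tbar -> Node ch <> tbar ->
    [/\ orthonormal_cols (@Qh m ch),
        same_range (@Qh m ch)
          (cat_cols (fun b a => @Ch1 m ch a b) (fun b a => @Ch0 m ch a b))
      & forall x k, @Uh (Node ch) x k =
          mode_prods (fun k b => @Qh m ch b k) (fun j => @Uh (ch j)) k x];
  run_node : forall m (ch : 'I_m -> tree), subtree (Node ch) tbar ->
    [/\ forall a bh, @Ch0 m ch a bh =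
          \sum_(b : {dffun forall j : 'I_m, 'I_(r (ch j))})
             @Cs m ch a b * \prod_(i < m)
               (* Mhat_{tau_i} = Uhat_{tau_i}^* U^0_{tau_i} *)
               (\sum_(x : Idx n (ch i))
                  (@Uh (ch i) x (bh i))^* * ttn_basis Ul0 C0 (ch i) x (b i)),
        ode_sol t0 t1
          (fun t Cc => mode_prods_adj
                         (@Fs (Node ch) t (mode_prods Cc (fun i => @Uh (ch i))))
                         (fun i => @Uh (ch i)))
          (@Cp m ch) (@Ch0 m ch)
      & forall a b, @Ch1 m ch a b = @Cp m ch t1 a b]
}.

End TTN.

Arguments ttn_basis {R n r} Ul Cn s _ _.
Arguments mode_prods {R n r0 m ch rc} Cn U _ _.
Arguments mode_prods_adj {R n r0 m ch rc} Z U _ _.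
Arguments Vmat {R n r m ch} i Qt U a x k.
Arguments prolong {R n r m ch i} Vm Y _ _.
Arguments restrict {R n r m ch i} Vm Z _ _.

From HB Require Import structures.
From mathcomp Require Import all_boot all_order all_algebra.
From mathcomp Require Import all_classical all_reals topology normedtype.
From mathcomp.real_closed Require Import complex.
From mathcomp Require Import ring.
Set Implicit Arguments. Unset Strict Implicit. Unset Printing Implicit Defensive.
Import Order.TTheory GRing.Theory Num.Theory.
Import numFieldNormedType.Exports.
Local Open Scope ring_scope.

(* The augmented initial connection tensor is C^0_tau x_i (Uhat_i^* U^0_i), so
   Yhat^0_tau = C^0_tau x_i (Uhat_i Uhat_i^* U^0_i), and it suffices that every
   Uhat_sigma (sigma < tbar) has orthonormal columns whose range contains that of
   U^0_sigma, so that Uhat_sigma Uhat_sigma^* fixes U^0_sigma.  At a leaf it is how Uhat_l is chosen.  At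
   sigma = (sigma_1,...,sigma_k), Uhat_sigma = Qhat_sigma x_j Uhat_(sigma_j) is
   orthonormal as a product of orthonormal factors, and the claim at the children
   gives U^0_sigma S^0_sigma = Chat^0_sigma x_j Uhat_(sigma_j), whose columns lie
   in the range of Uhat_sigma since those of mat_0(Chat^0_sigma)^T lie in that of
   Qhat_sigma.  It remains that S^0_sigma is invertible: full multilinear rank
   of the connection tensors propagates from the root downwards through the QR
   factorizations mat_i(C^0_tau)^T = Q^0 S^(0,T) and the updates
   C^0_sigma x_0 S^(0,T). *)

Lemma big_prod_sum_dffun (K : comPzSemiRingType) (I : finType) (T : I -> finType)
  (f : forall i, T i -> K) :
  \prod_(i : I) \sum_(k : T i) f i k =
  \sum_(g : {dffun forall i : I, T i}) \prod_(i : I) f i (g i).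
Proof.
transitivity (\prod_(i : I) \sum_(j in tagged_with T i) untag 0 (f i) j).
  by apply: eq_bigr => i _; rewrite (big_tag (fun i => f i)).
rewrite bigA_distr_big_dep.
pose P_ := fun i => [ffun k : T i => f i k].
transitivity (\sum_(g in family (tagged_with T))
                \prod_(i : I) untag 0 (P_ i) (g i)).
  apply: eq_bigr => g _; apply: eq_bigr => i _.
  by rewrite /untag; case: eqP => // e; rewrite ffunE.
rewrite -(big_fprod _ _ P_) (reindex (@fprod_of_dffun _ T)); last first.
  exact/onW_bij/fprod_of_dffun_bij.
by apply: eq_bigr => g _; apply: eq_bigr => i _; rewrite ffunE fprodE.
Qed.

Lemma prod_eq_dffun (K : comPzSemiRingType) (I : finType) (T : I -> finType)
  (b b' : {dffun forall i : I, T i}) :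
  \prod_(i : I) ((b i == b' i)%:R : K) = (b == b')%:R.
Proof.
have [->|neq_bb'] := eqVneq b b'; first by rewrite big1 // => i _; rewrite eqxx.
have [i neq_i] : exists i, b i != b' i.
  apply/existsP; apply: contraNT neq_bb'; rewrite negb_exists => /forallP eq_b.
  by apply/eqP/ffunP => i; apply/eqP; rewrite -[_ == _]negbK eq_b.
by rewrite (bigD1 i) //= (negPf neq_i) mul0r.
Qed.

Lemma dfw_at m (T : 'I_m -> finType) (b : {dffun forall j : 'I_m, T j}) i k :
  dfw b i k i = k.
Proof. by rewrite /dfw ffunE dfwithin. Qed.

Lemma dfw_dfw m (T : 'I_m -> finType) (b : {dffun forall j : 'I_m, T j}) i k k' :
  dfw (dfw b i k) i k' = dfw b i k'.
Proof.
apply/ffunP => j; rewrite /dfw !ffunE.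
have [<-|neq_ij] := eqVneq i j; first by rewrite !dfwithin.
by rewrite !dfwithout // ffunE dfwithout.
Qed.

Section LinearAlgebra.
Context {R : realType}.
Local Notation C := (R[i]).

Definition free_rows {I J : finType} (A : I -> J -> C) : Prop :=
  forall c : I -> C, (forall j, \sum_i c i * A i j = 0) -> forall i, c i = 0.

Definition mode_free {r0 m} {rc : 'I_m -> nat} (Cn : ctens r0 rc) (i : 'I_m) : Prop :=
  forall c : 'I_(rc i) -> C,
    (forall a b, \sum_(k < rc i) c k * Cn a (dfw b i k) = 0) -> forall k, c k = 0.

Lemma free_rows_rinv k l (S : 'I_k -> 'I_l -> C) : free_rows S ->
  exists T : 'I_l -> 'I_k -> C,
    forall j j', \sum_(a < l) S j a * T a j' = (j == j')%:R.
Proof.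
move=> freeS; pose Sm := \matrix_(j < k, a < l) S j a.
have /row_freeP[T SmT] : row_free Sm.
  rewrite -kermx_eq0; apply/eqP/row_matrixP => j0; rewrite row0.
  apply/rowP => j; rewrite [LHS]mxE [RHS]mxE.
  apply: (freeS (fun j => kermx Sm j0 j)) => a.
  transitivity ((kermx Sm *m Sm) j0 a); last by rewrite mulmx_ker mxE.
  by rewrite [RHS]mxE; apply: eq_bigr => j' _; congr (_ * _); rewrite mxE.
exists (fun a j' => T a j') => j j'.
have := congr1 (fun M : 'M[C]_k => M j j') SmT; rewrite !mxE => <-.
by apply: eq_bigr => a _; rewrite mxE.
Qed.

Lemma range_sub_rinv (I K : finType) k l (A : I -> 'I_k -> C)
  (S : 'I_k -> 'I_l -> C) (B : I -> K -> C) :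
  free_rows S -> range_sub (fun x a => \sum_(j < k) A x j * S j a) B ->
  range_sub A B.
Proof.
move=> /free_rows_rinv[T ST] ASB j'.
have [c ASc] := choice ASB.
exists (fun q => \sum_a c a q * T a j') => x.
transitivity (\sum_(j < k) A x j * (j == j')%:R).
  rewrite (bigD1 j') //= eqxx mulr1 big1 ?addr0 // => j /negPf->.
  by rewrite mulr0.
under eq_bigr => j _ do rewrite -ST mulr_sumr.
rewrite exchange_big /=.
transitivity (\sum_(a < l) (\sum_(j < k) A x j * S j a) * T a j').
  by apply: eq_bigr => a _; rewrite big_distrl; apply: eq_bigr => j _; rewrite mulrA.
transitivity (\sum_(a < l) (\sum_q B x q * c a q) * T a j').
  by apply: eq_bigr => a _; congr (_ * _); apply: ASc.
under [LHS]eq_bigr => a _ do rewrite big_distrl.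
rewrite exchange_big /=; apply: eq_bigr => q _.
by rewrite mulr_sumr; apply: eq_bigr => a _; rewrite mulrA.
Qed.

Lemma orthonormal_proj (I J : finType) k (W : I -> 'I_k -> C) (A : I -> J -> C) :
  orthonormal_cols W -> range_sub A W ->
  forall x b, \sum_(j < k) W x j * (\sum_y (W y j)^* * A y b) = A x b.
Proof.
move=> orthoW AW x b; have [c Ac] := AW b.
rewrite Ac; apply: eq_bigr => j _; congr (_ * _).
under eq_bigr => y _ do rewrite Ac mulr_sumr.
rewrite exchange_big /=.
under eq_bigr => i _ do under eq_bigr => y _ do rewrite mulrA.
under eq_bigr => i _ do rewrite -big_distrl /= orthoW.
rewrite (bigD1 j) //= eqxx mul1r big1 ?addr0 // => i neq_i.
by rewrite eq_sym (negPf neq_i) mul0r.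
Qed.

Lemma free_rows_QR r0 m (rc : 'I_m -> nat) (Cn Q : ctens r0 rc) (i : 'I_m)
  (S : 'I_(rc i) -> 'I_(rc i) -> C) :
  (forall a b, Cn a b = \sum_(k < rc i) Q a (dfw b i k) * S (b i) k) ->
  mode_free Cn i -> free_rows S.
Proof.
move=> CnQS freeCn c cS; apply: freeCn => a b.
under eq_bigr => j _ do rewrite CnQS dfw_at mulr_sumr.
rewrite exchange_big big1 // => k _.
under eq_bigr => j _ do rewrite dfw_dfw mulrCA.
by rewrite -mulr_sumr cS mulr0.
Qed.

Lemma mode_free_mul0 r0 r1 m (rc : 'I_m -> nat) (S : 'I_r1 -> 'I_r0 -> C)
  (D : ctens r1 rc) (i : 'I_m) :
  free_rows S -> mode_free D i ->
  mode_free (fun a b => \sum_(k < r1) S k a * D k b : C) i.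
Proof.
move=> freeS freeD c cSD; apply: freeD => a1 b.
apply: (freeS (fun a1 => \sum_k c k * D a1 (dfw b i k))) => a.
rewrite -[RHS](cSD a b).
under [RHS]eq_bigr => k _ do rewrite mulr_sumr.
rewrite [RHS]exchange_big /=; apply: eq_bigr => j _.
by rewrite mulr_suml; apply: eq_bigr => k _; ring.
Qed.

Section ModeProducts.
Variables (n : nat -> nat) (m : nat) (ch : 'I_m -> tree).

Lemma mode_prods_mul0 r0 r1 (rc : 'I_m -> nat) (M : 'I_r0 -> 'I_r1 -> C)
  (D : ctens r1 rc) (W : forall i : 'I_m, Idx n (ch i) -> 'I_(rc i) -> C) a x :
  mode_prods (fun a b => \sum_(k < r1) M a k * D k b) W a x
  = \sum_(k < r1) M a k * mode_prods D W k x.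
Proof.
rewrite /mode_prods; under eq_bigr => b _ do rewrite mulr_suml.
rewrite exchange_big; apply: eq_bigr => k _; rewrite mulr_sumr.
by apply: eq_bigr => b _; rewrite mulrA.
Qed.

Lemma mode_prods_assoc r0 (rc rc' : 'I_m -> nat) (Cn : ctens r0 rc)
  (M : forall i : 'I_m, 'I_(rc' i) -> 'I_(rc i) -> C)
  (W : forall i : 'I_m, Idx n (ch i) -> 'I_(rc' i) -> C) a x :
  mode_prods (fun a b' => \sum_b Cn a b * \prod_(i < m) M i (b' i) (b i)) W a x
  = mode_prods Cn (fun i y k => \sum_(j < rc' i) W i y j * M i j k) a x.
Proof.
rewrite /mode_prods; under eq_bigr => b' _ do rewrite mulr_suml.
rewrite exchange_big; apply: eq_bigr => b _.
rewrite big_prod_sum_dffun mulr_sumr; apply: eq_bigr => b' _.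
by rewrite big_split /=; ring.
Qed.

Lemma mode_prods_range_sub r0 r1 (rc : 'I_m -> nat) (Cn : ctens r0 rc)
  (Q : {dffun forall i : 'I_m, 'I_(rc i)} -> 'I_r1 -> C)
  (W : forall i : 'I_m, Idx n (ch i) -> 'I_(rc i) -> C) :
  range_sub (fun b a => Cn a b) Q ->
  range_sub (fun x a => mode_prods Cn W a x)
            (fun x k => mode_prods (fun k b => Q b k) W k x).
Proof.
move=> CnQ; have [c Qc] := choice CnQ.
move=> a; exists (c a) => x.
transitivity (mode_prods (fun a b => \sum_k c a k * Q b k) W a x).
  apply: eq_bigr => b _; rewrite Qc; congr (_ * _).
  by apply: eq_bigr => k _; rewrite mulrC.
by rewrite mode_prods_mul0; apply: eq_bigr => k _; rewrite mulrC.
Qed.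

Lemma orthonormal_mode_prods r0 (rc : 'I_m -> nat)
  (Q : {dffun forall i : 'I_m, 'I_(rc i)} -> 'I_r0 -> C)
  (W : forall i : 'I_m, Idx n (ch i) -> 'I_(rc i) -> C) :
  orthonormal_cols Q -> (forall i, orthonormal_cols (W i)) ->
  orthonormal_cols (fun x k => mode_prods (fun k b => Q b k) W k x).
Proof.
move=> orthoQ orthoW j j'.
have orthoWW (b b' : {dffun forall i : 'I_m, 'I_(rc i)}) :
   \sum_(x : Idx n (Node ch)) \prod_(i < m)
    ((W i (idx_at x i) (b i))^* * W i (idx_at x i) (b' i)) = (b == b')%:R.
  transitivity (\prod_(i < m) \sum_y ((W i y (b i))^* * W i y (b' i))).
    by rewrite big_prod_sum_dffun.
  transitivity (\prod_(i < m) ((b i == b' i)%:R : C)).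
    by apply: eq_bigr => i _; rewrite orthoW.
  exact: prod_eq_dffun.
transitivity (\sum_b \sum_b' (Q b j)^* * Q b' j' * (b == b')%:R).
  under eq_bigr => x _ do rewrite /mode_prods rmorph_sum /= big_distrlr /=.
  rewrite exchange_big /=; apply: eq_bigr => b _.
  rewrite exchange_big /=; apply: eq_bigr => b' _.
  rewrite -orthoWW mulr_sumr; apply: eq_bigr => x _.
  by rewrite rmorphM rmorph_prod /= big_split /=; ring.
rewrite -orthoQ; apply: eq_bigr => b _.
rewrite (bigD1 b) //= eqxx mulr1 big1 ?addr0 // => b' /negPf neq_b'.
by rewrite eq_sym neq_b' mulr0.
Qed.

End ModeProducts.
End LinearAlgebra.

Fixpoint tsize (s : tree) : nat :=
  match s with
  | Leaf _ => 1
  | Node m ch => (sumn [seq tsize (ch i) | i <- enum 'I_m]).+1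
  end.

Lemma mem_leq_sumn (s : seq nat) x : x \in s -> (x <= sumn s)%N.
Proof.
elim: s => //= y s IHs; rewrite in_cons => /predU1P[->|/IHs]; first exact: leq_addr.
by move/leq_trans; apply; apply: leq_addl.
Qed.

Lemma tsize_child m (ch : 'I_m -> tree) i : (tsize (ch i) < tsize (Node ch))%N.
Proof. by rewrite ltnS mem_leq_sumn // map_f // mem_enum. Qed.

Lemma subtree_tsize s t : subtree s t -> (tsize s <= tsize t)%N.
Proof. by elim=> // m ch i _ /leq_trans; apply; apply/ltnW/tsize_child. Qed.

Lemma subtree_trans s t u : subtree s t -> subtree t u -> subtree s u.
Proof. by move=> st; elim=> // m ch i _; apply: subtree_child. Qed.

Lemma child_subtree m (ch : 'I_m -> tree) i t :
  subtree (Node ch) t -> subtree (ch i) t.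
Proof. by apply: subtree_trans; apply: (@subtree_child _ _ _ i); apply: subtree_refl. Qed.

Lemma child_neq m (ch : 'I_m -> tree) i t : subtree (Node ch) t -> ch i <> t.
Proof. by move=> /subtree_tsize + chi_t; rewrite -chi_t leqNgt tsize_child. Qed.

Lemma subtree_parent s t : subtree s t -> s <> t ->
  exists m (ch : 'I_m -> tree) i, ch i = s /\ subtree (Node ch) t.
Proof.
elim=> [//|m ch i _ IHs _].
have [->|neq_s] := pselect (s = ch i).
  by exists m, ch, i; split; last exact: subtree_refl.
have [m' [ch' [i' [chi_s le_ch']]]] := IHs neq_s.
by exists m', ch', i'; split; last exact: subtree_child le_ch'.
Qed.

Arguments child_subtree {m ch} i {t}.
Arguments child_neq {m ch} i {t}.

Section IntegratorRun.
Context {R : realType} {n : nat -> nat} {r : tree -> nat} {tbar : tree}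
  {Ul0 : forall l, 'I_(n l) -> 'I_(r (Leaf l)) -> R[i]}
  {C0 : forall m (ch : 'I_m -> tree), ctens (R:=R) (r (Node ch)) (fun i => r (ch i))}
  {F : R -> V (R:=R) n r tbar -> V (R:=R) n r tbar} {t0 t1 : R}.
Variable run : integrator_run Ul0 C0 F t0 t1.

Local Notation U0 := (ttn_basis Ul0 C0).
Local Notation S0 s := (@Sf _ _ _ _ _ _ _ _ _ run s).
Local Notation Cstart ch := (@Cs _ _ _ _ _ _ _ _ _ run _ ch).
Local Notation Uhat s := (@Uh _ _ _ _ _ _ _ _ _ run s).
Local Notation Chat0 ch := (@Ch0 _ _ _ _ _ _ _ _ _ run _ ch).

Definition orthonormal_augmentation (s : tree) : Prop :=
  orthonormal_cols (Uhat s) /\ range_sub (U0 s) (Uhat s).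

Lemma mode_prods_Chat0 m (ch : 'I_m -> tree) : subtree (Node ch) tbar ->
  (forall i, orthonormal_augmentation (ch i)) ->
  forall a x, mode_prods (Chat0 ch) (fun i => Uhat (ch i)) a x
            = mode_prods (Cstart ch) (fun i => U0 (ch i)) a x.
Proof.
move=> le_ch aug a x; have [Chat0E _ _] := run_node run le_ch.
transitivity (mode_prods (Cstart ch) (fun i y k =>
  \sum_j Uhat (ch i) y j * \sum_z (Uhat (ch i) z j)^* * U0 (ch i) z k) a x).
  by rewrite -mode_prods_assoc; apply: eq_bigr => b _; rewrite Chat0E.
apply: eq_bigr => b _; congr (_ * _); apply: eq_bigr => i _.
by case: (aug i) => orthoU rangeU; apply: orthonormal_proj.
Qed.

Lemma Cstart_child m (ch : 'I_m -> tree) :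
  subtree (Node ch) tbar -> Node ch <> tbar ->
  Cstart ch = fun a b => \sum_k S0 (Node ch) k a * @C0 m ch k b.
Proof. by move=> le_ch neq_ch; do 2![apply/funext => ?]; apply: run_C_child. Qed.

Lemma orthonormal_augmentation_node m (ch : 'I_m -> tree) :
  subtree (Node ch) tbar -> Node ch <> tbar ->
  free_rows (S0 (Node ch)) -> (forall i, orthonormal_augmentation (ch i)) ->
  orthonormal_augmentation (Node ch).
Proof.
move=> le_ch neq_ch freeS aug.
have [orthoQ [_ rangeQ] UhatE] := run_inner run le_ch neq_ch.
split.
  move=> j j'; under eq_bigr do rewrite !UhatE.
  by apply: orthonormal_mode_prods => // i; case: (aug i).
apply: (range_sub_rinv freeS) => a.
have [c Uc] := mode_prods_range_sub (fun i => Uhat (ch i)) (fun a => rangeQ (inr a)) a.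
exists c => x.
transitivity (mode_prods (Chat0 ch) (fun i => Uhat (ch i)) a x).
  rewrite mode_prods_Chat0 // Cstart_child // mode_prods_mul0.
  by apply: eq_bigr => k _; rewrite mulrC.
by rewrite Uc; apply: eq_bigr => k _; rewrite UhatE.
Qed.

Hypothesis fullC0 : forall m (ch : 'I_m -> tree), subtree (Node ch) tbar ->
  full_mlrank (@C0 m ch).

Definition start_full_rank (s : tree) : Prop :=
  if s is Node m ch then forall i, mode_free (Cstart ch) i else True.

Lemma start_full_rank_root : start_full_rank tbar.
Proof.
case E: tbar => [//|m ch] i c cC.
have le_ch : subtree (Node ch) tbar by rewrite E; apply: subtree_refl.
have [_ freeC0] := fullC0 le_ch; apply: (freeC0 i c) => a b.
by rewrite -[RHS](cC a b); apply: eq_bigr => k _; rewrite (run_root_C run (esym E)).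
Qed.

Lemma free_rows_S0_child m (ch : 'I_m -> tree) i : subtree (Node ch) tbar ->
  start_full_rank (Node ch) -> free_rows (S0 (ch i)).
Proof.
move=> le_ch full_ch; have [QR _ _] := run_QR run i le_ch.
exact: free_rows_QR QR (full_ch i).
Qed.

Lemma start_full_rank_child m (ch : 'I_m -> tree) i : subtree (Node ch) tbar ->
  start_full_rank (Node ch) -> start_full_rank (ch i).
Proof.
move=> le_ch full_ch; have := free_rows_S0_child (i := i) le_ch full_ch.
have := child_subtree i le_ch; have := child_neq i le_ch.
case: (ch i) => [//|m' ch'] neq_ch' le_ch' freeS j /=.
have [_ freeC0] := fullC0 le_ch'.
by rewrite Cstart_child //; apply: mode_free_mul0 freeS (freeC0 j).
Qed.

Lemma start_full_rank_subtree s : subtree s tbar -> start_full_rank s.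
Proof.
suff down t : subtree s t -> subtree t tbar -> start_full_rank t -> start_full_rank s.
  by move=> le_s; apply: down le_s (subtree_refl _) start_full_rank_root.
elim=> // m ch i _ IHs le_ch full_ch.
exact: IHs (child_subtree i le_ch) (start_full_rank_child i le_ch full_ch).
Qed.

Lemma free_rows_S0 s : subtree s tbar -> s <> tbar -> free_rows (S0 s).
Proof.
move=> le_s neq_s; have [m [ch [i [<- le_ch]]]] := subtree_parent le_s neq_s.
exact: free_rows_S0_child le_ch (start_full_rank_subtree le_ch).
Qed.

Lemma orthonormal_augmentation_subtree s : subtree s tbar -> s <> tbar ->
  orthonormal_augmentation s.
Proof.
elim: s => [l|m ch IHch] le_s neq_s.
  have [_ orthoU [_ rangeU]] := run_leaf run le_s neq_s.
  by split=> // k; apply: rangeU (inr k).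
apply: orthonormal_augmentation_node => //; first exact: free_rows_S0.
by move=> i; apply: IHch; [apply: child_subtree le_s | apply: child_neq le_s].
Qed.

End IntegratorRun.

Theorem lemma6p1 (R : realType) (d : nat) (n : nat -> nat) (r : tree -> nat)
  (tbar : tree)
  (Ul0 : forall l : nat, 'I_(n l) -> 'I_(r (Leaf l)) -> R[i])
  (C0 : forall m (ch : 'I_m -> tree), ctens (r (Node ch)) (fun i => r (ch i)))
  (F : R -> V n r tbar -> V n r tbar) (t0 t1 : R) :
  tree_on d tbar ->
  r tbar = 1%N ->
  (* the starting TTN is orthonormal ... *)
  (forall s : tree, subtree s tbar -> s <> tbar ->
     orthonormal_cols (ttn_basis Ul0 C0 s)) ->
  (* ... and of full tree rank *)
  (forall m (ch : 'I_m -> tree), subtree (Node ch) tbar ->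
     full_mlrank (C0 m ch)) ->
  t0 < t1 ->
  forall run : integrator_run Ul0 C0 F t0 t1,
  forall m (ch : 'I_m -> tree), subtree (Node ch) tbar ->
  forall (a : 'I_(r (Node ch))) (x : Idx n (Node ch)),
    mode_prods (@Ch0 _ _ _ _ _ _ _ _ _ run m ch) (fun i => @Uh _ _ _ _ _ _ _ _ _ run (ch i)) a x
    = mode_prods (@Cs _ _ _ _ _ _ _ _ _ run m ch) (fun i => ttn_basis Ul0 C0 (ch i)) a x.
Proof.
move=> _ _ _ fullC0 _ run m ch le_ch.
apply: (mode_prods_Chat0 le_ch) => i.
exact: (orthonormal_augmentation_subtree run fullC0
  (child_subtree i le_ch) (child_neq i le_ch)).
Qed.
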